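(* The Schubert cell $S_{w_0,w_0}$ is the disjoint union of the following $G$-orbits of points $(P,Pw_0,Pw_0n)$: (i) for each $u\in\mathbb{R}^\times$, the orbit with $n=n(1,1,u)$, of dimension $8$ (the maximal dimension), these orbits being distinct for distinct $u$; (ii) three orbits of dimension $8$ with $n=n(0,1,1)$, $n(1,0,1)$, $n(1,1,0)$, each with trivial stabilizer; (iii) three orbits of dimension $7$: $n=n(1,0,0)$ with stabilizer $\{d(a,a,1/a^2):a\in\mathbb{R}^\times\}$, $n=n(0,1,0)$ with stabilizer $\{d(a,1/a^2,a):a\in\mathbb{R}^\times\}$, and $n=n(0,0,1)$ with stabilizer $\{d(1/a^2,a,a):a\in\mathbb{R}^\times\}$; (iv) one orbit of dimension $6$ with $n=n(0,0,0)$ and stabilizer $D$.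
   Context: $G=\mathrm{SL}_3(\mathbb{R})$, $P$ the upper triangular matrices in $G$, $D$ the diagonal matrices in $G$; $G$ acts on $X=(P\backslash G)^3$ by right multiplication in each coordinate. $n(x,y,z)=\begin{pmatrix}1&x&y\\0&1&z\\0&0&1\end{pmatrix}$, $d(a,b,c)=\operatorname{diag}(a,b,c)$. $w_0=\begin{pmatrix}0&0&-1\\0&-1&0\\-1&0&0\end{pmatrix}$. $S_{w_0,w_0}=\big(\{P\}\times P\backslash Pw_0P\times P\backslash Pw_0P\big)\cdot G$. The stabilizer of $(P,Pv,Pwn)$ is $P\cap v^{-1}Pv\cap (wn)^{-1}P(wn)$. *)

From HB Require Import structures.
From mathcomp Require Import all_boot all_order all_algebra.
From mathcomp Require Import reals.
Set Implicit Arguments. Unset Strict Implicit. Unset Printing Implicit Defensive.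
Import Order.TTheory GRing.Theory Num.Theory.
Local Open Scope ring_scope.

Section Defs.
Variable R : realType.
Local Notation M := 'M[R]_3.

Definition mx3 (a00 a01 a02 a10 a11 a12 a20 a21 a22 : R) : M :=
  \matrix_(i < 3, j < 3)
    nth 0 (nth [::] [:: [:: a00; a01; a02]; [:: a10; a11; a12];
                        [:: a20; a21; a22]] i) j.

Definition nmx (x y z : R) : M := mx3 1 x y  0 1 z  0 0 1.
Definition dmx (a b c : R) : M := mx3 a 0 0  0 b 0  0 0 c.
Definition w0 : M := mx3 0 0 (-1)  0 (-1) 0  (-1) 0 0.

Definition inG (g : M) : Prop := \det g = 1.
Definition upper (A : M) : Prop := forall i j : 'I_3, (j < i)%N -> A i j = 0.
Definition inP (p : M) : Prop := inG p /\ upper p.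

(* Right cosets: P g = P h  iff  g h^{-1} in P *)
Definition coset_eq (g h : M) : Prop := inP (g *m invmx h).

(* Points of X = (P\G)^3 are represented by triples of elements of G *)
Definition pt := (M * M * M)%type.
Definition inX (x : pt) : Prop := [/\ inG x.1.1, inG x.1.2 & inG x.2].
Definition pt_eq (x y : pt) : Prop :=
  [/\ coset_eq x.1.1 y.1.1, coset_eq x.1.2 y.1.2 & coset_eq x.2 y.2].
Definition act (x : pt) (g : M) : pt := (x.1.1 *m g, x.1.2 *m g, x.2 *m g).

Definition in_Gorbit (x y : pt) : Prop :=
  inX y /\ exists g, inG g /\ pt_eq y (act x g).

Definition in_stab (x : pt) (g : M) : Prop := inG g /\ pt_eq (act x g) x.

Definition inPw0P (v : M) : Prop := exists p q, inP p /\ inP q /\ v = p *m w0 *m q.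

(* S_{w0,w0} = ({P} x P\Pw0P x P\Pw0P) . G *)
Definition in_S (y : pt) : Prop :=
  inX y /\ exists v v' g, [/\ inPw0P v, inPw0P v', inG g &
                             pt_eq y (act (1%:M, v, v') g)].

Definition base_pt (n : M) : pt := (1%:M, w0, w0 *m n).

(* Dimension of the orbit through x = dim G - dim Lie(Stab_x), where
   Lie(Stab_x) = { X in sl_3 : g_i X g_i^{-1} is upper triangular, i=1,2,3 }
   (the Lie algebra of the stabilizer  g_1^{-1}Pg_1 ∩ g_2^{-1}Pg_2 ∩ g_3^{-1}Pg_3). *)
Definition lowpart (A : M) : M := \matrix_(i, j) if (j < i)%N then A i j else 0.
Definition stab_constraints (x : pt) (X : M) : (M * M) * (M * R^o) :=
  ((lowpart (x.1.1 *m X *m invmx x.1.1), lowpart (x.1.2 *m X *m invmx x.1.2)),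
   (lowpart (x.2 *m X *m invmx x.2), (\tr X : R^o))).
Definition stab_lie_dim (x : pt) : nat := \dim (lker (linfun (stab_constraints x))).
Definition orbit_dim (x : pt) : nat := (8 - stab_lie_dim x)%N.

End Defs.

Inductive rep (R : Type) :=
| Gen of R
| N011 | N101 | N110 | N100 | N010 | N001 | N000.
Arguments N011 {R}. Arguments N101 {R}. Arguments N110 {R}. Arguments N100 {R}.
Arguments N010 {R}. Arguments N001 {R}. Arguments N000 {R}.

Definition rep_n (R : realType) (r : rep R) : 'M[R]_3 :=
  match r with
  | Gen u => nmx 1 1 u
  | N011 => nmx 0 1 1 | N101 => nmx 1 0 1 | N110 => nmx 1 1 0
  | N100 => nmx 1 0 0 | N010 => nmx 0 1 0 | N001 => nmx 0 0 1
  | N000 => nmx 0 0 0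
  end.

Definition rep_valid (R : realType) (r : rep R) : Prop :=
  match r with Gen u => u <> 0 | _ => True end.

(* The stabilizer of the pair (P, P w0) is P ∩ w0 P w0 = D, and every point of S can be
   moved to (P, P w0, P w0 m) with m ∈ P; writing m = d n(x,y,z) with d diagonal, the orbits
   in S are the D-orbits of triples (x,y,z) under (x,y,z)·d(a,b,c) = (xb/a, yc/a, zc/b).
   As real cube roots exist, D rescales (x,y) by an arbitrary (s,t) while z is multiplied
   by t/s, so an orbit is determined by which coordinates vanish and, when none does, by
   the invariant xz/y.  Stabilizers are the subgroups of D fixing a triple, and their Lie
   algebras are the traceless diag(p,q,r) with x(q-p) = y(r-p) = z(r-q) = 0. *)

From HB Require Import structures.
From mathcomp Require Import all_boot all_order all_algebra.
From mathcomp Require Import reals.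
From mathcomp Require Import ring lra.
Set Implicit Arguments. Unset Strict Implicit. Unset Printing Implicit Defensive.
Import Order.TTheory GRing.Theory Num.Theory.
Local Open Scope ring_scope.

Section Matrices3.
Variable R : realType.
Local Notation M := 'M[R]_3.

Definition i0 : 'I_3 := @Ordinal 3 0 isT.
Definition i1 : 'I_3 := @Ordinal 3 1 isT.
Definition i2 : 'I_3 := @Ordinal 3 2 isT.

Lemma ord3P (P : 'I_3 -> Prop) : P i0 -> P i1 -> P i2 -> forall i, P i.
Proof.
move=> P0 P1 P2 [[|[|[|//]]] lt_i3].
- by rewrite (_ : Ordinal lt_i3 = i0) //; apply: val_inj.
- by rewrite (_ : Ordinal lt_i3 = i1) //; apply: val_inj.
- by rewrite (_ : Ordinal lt_i3 = i2) //; apply: val_inj.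
Qed.

Lemma mx3_eta (A : M) : A = mx3 (A i0 i0) (A i0 i1) (A i0 i2) (A i1 i0) (A i1 i1) (A i1 i2)
   (A i2 i0) (A i2 i1) (A i2 i2).
Proof. by apply/matrixP; elim/ord3P; elim/ord3P; rewrite mxE. Qed.

Lemma mx3_inj a00 a01 a02 a10 a11 a12 a20 a21 a22 b00 b01 b02 b10 b11 b12 b20 b21 b22 :
  mx3 a00 a01 a02 a10 a11 a12 a20 a21 a22 = mx3 b00 b01 b02 b10 b11 b12 b20 b21 b22 :> M ->
  [:: a00; a01; a02; a10; a11; a12; a20; a21; a22] =
  [:: b00; b01; b02; b10; b11; b12; b20; b21; b22].
Proof.
move=> /matrixP E.
have := E i0 i0; have := E i0 i1; have := E i0 i2; have := E i1 i0; have := E i1 i1.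
have := E i1 i2; have := E i2 i0; have := E i2 i1; have := E i2 i2.
by rewrite !mxE /= => -> -> -> -> -> -> -> -> ->.
Qed.

Lemma mx3_mul a00 a01 a02 a10 a11 a12 a20 a21 a22 b00 b01 b02 b10 b11 b12 b20 b21 b22 :
  mx3 a00 a01 a02 a10 a11 a12 a20 a21 a22 *m mx3 b00 b01 b02 b10 b11 b12 b20 b21 b22 =
  mx3 (a00*b00+a01*b10+a02*b20) (a00*b01+a01*b11+a02*b21) (a00*b02+a01*b12+a02*b22)
      (a10*b00+a11*b10+a12*b20) (a10*b01+a11*b11+a12*b21) (a10*b02+a11*b12+a12*b22)
      (a20*b00+a21*b10+a22*b20) (a20*b01+a21*b11+a22*b21) (a20*b02+a21*b12+a22*b22) :> M.
Proof.
apply/matrixP; elim/ord3P; elim/ord3P;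
  by rewrite !mxE !big_ord_recr big_ord0 /= !mxE /= add0r.
Qed.

Lemma mx3_det a00 a01 a02 a10 a11 a12 a20 a21 a22 :
  \det (mx3 a00 a01 a02 a10 a11 a12 a20 a21 a22 : M) =
  a00 * (a11 * a22 - a12 * a21) - a01 * (a10 * a22 - a12 * a20) + a02 * (a10 * a21 - a11 * a20).
Proof.
rewrite (expand_det_row _ i0) !big_ord_recr big_ord0 /= add0r.
rewrite /cofactor !(expand_det_row _ ord0) !big_ord_recr big_ord0 /= !add0r.
rewrite /cofactor !big_ord0 !add0r !det_mx11 !mxE /= !add0n; ring.
Qed.

Lemma mx3_tr a00 a01 a02 a10 a11 a12 a20 a21 a22 :
  \tr (mx3 a00 a01 a02 a10 a11 a12 a20 a21 a22 : M) = a00 + a11 + a22.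
Proof. by rewrite /mxtrace !big_ord_recr big_ord0 /= !mxE /= add0r. Qed.

Lemma mx3_one : 1%:M = mx3 1 0 0 0 1 0 0 0 1 :> M.
Proof. by apply/matrixP; elim/ord3P; elim/ord3P; rewrite !mxE. Qed.

Lemma mx3_zero : 0 = mx3 0 0 0 0 0 0 0 0 0 :> M.
Proof. by apply/matrixP; elim/ord3P; elim/ord3P; rewrite !mxE. Qed.

Lemma mx3_upper a00 a01 a02 a10 a11 a12 a20 a21 a22 :
  upper (mx3 a00 a01 a02 a10 a11 a12 a20 a21 a22 : M) <-> [/\ a10 = 0, a20 = 0 & a21 = 0].
Proof.
split=> [U | [h10 h20 h21]]; last by elim/ord3P; elim/ord3P; rewrite // mxE.
by have := U i1 i0 isT; have := U i2 i0 isT; have := U i2 i1 isT; rewrite !mxE.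
Qed.

Lemma mx3_lowpart a00 a01 a02 a10 a11 a12 a20 a21 a22 :
  lowpart (mx3 a00 a01 a02 a10 a11 a12 a20 a21 a22 : M) = mx3 0 0 0 a10 0 0 a20 a21 0.
Proof. by apply/matrixP; elim/ord3P; elim/ord3P; rewrite !mxE. Qed.

End Matrices3.

Section Groups.
Variable R : realType.
Local Notation M := 'M[R]_3.
Local Notation w0 := (@w0 R).

Lemma invmx_eq (A B : M) : A *m B = 1%:M -> invmx A = B.
Proof.
move=> AB; have [uA _] := mulmx1_unit AB.
by rewrite -[invmx A]mulmx1 -AB mulmxA mulVmx // mul1mx.
Qed.

Lemma inG_unit (g : M) : inG g -> g \in unitmx.
Proof. by rewrite /inG unitmxE => ->; exact: unitr1. Qed.

Lemma inG1 : inG (1%:M : M).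
Proof. exact: det1. Qed.

Lemma inGM (g h : M) : inG g -> inG h -> inG (g *m h).
Proof. by rewrite /inG det_mulmx => -> ->; rewrite mulr1. Qed.

Lemma inGV (g : M) : inG g -> inG (invmx g).
Proof. by rewrite /inG det_inv => ->; rewrite invr1. Qed.

Lemma inP_inG (p : M) : inP p -> inG p.
Proof. by case. Qed.

Lemma inP_form (p : M) : inP p ->
  exists a b c d e f, p = mx3 a b c 0 d e 0 0 f /\ a * d * f = 1.
Proof.
rewrite /inP /inG [p]mx3_eta mx3_upper mx3_det => -[+ [h10 h20 h21]].
rewrite h10 h20 h21 => D; do 6 eexists; split; first reflexivity.
by rewrite -D; ring.
Qed.

Lemma inP_mx3 (a b c d e f : R) : a * d * f = 1 -> inP (mx3 a b c 0 d e 0 0 f).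
Proof. by move=> adf; split; [rewrite /inG mx3_det -adf; ring | apply/mx3_upper]. Qed.

Lemma prod3_neq0 (a b c : R) : a * b * c = 1 -> [/\ a != 0, b != 0 & c != 0].
Proof.
move=> abc; have : a * b * c != 0 by rewrite abc oner_neq0.
by rewrite !mulf_eq0 !negb_or => /andP[/andP[-> ->] ->].
Qed.

Lemma inP1 : inP (1%:M : M).
Proof. by rewrite mx3_one; apply: inP_mx3; ring. Qed.

Lemma inPM (p q : M) : inP p -> inP q -> inP (p *m q).
Proof.
move=> /inP_form[a [b [c [d [e [f [-> adf]]]]]]] /inP_form[a' [b' [c' [d' [e' [f' [-> adf']]]]]]].
rewrite mx3_mul !(mulr0, mul0r, addr0, add0r); apply: inP_mx3.
by rewrite -[1]mulr1 -{1}adf -adf'; ring.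
Qed.

Lemma inPV (p : M) : inP p -> inP (invmx p).
Proof.
move=> /inP_form[a [b [c [d [e [f [-> adf]]]]]]]; have [a0 d0 f0] := prod3_neq0 adf.
rewrite (@invmx_eq _ (mx3 a^-1 (- b / (a * d)) ((b * e - c * d) / (a * d * f))
                         0 d^-1 (- e / (d * f)) 0 0 f^-1)).
  by apply: inP_mx3; rewrite -!invfM adf invr1.
by rewrite mx3_mul mx3_one; congr mx3; field; rewrite ?a0 ?d0 ?f0.
Qed.

Lemma w0K : w0 *m w0 = 1%:M.
Proof. by rewrite mx3_mul mx3_one; congr mx3; ring. Qed.

Lemma invmx_w0 : invmx w0 = w0.
Proof. exact/invmx_eq/w0K. Qed.

Lemma inGw0 : inG w0.
Proof. by rewrite /inG mx3_det; ring. Qed.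

Lemma inP_dmx (a b c : R) : a * b * c = 1 -> inP (dmx a b c).
Proof. exact: inP_mx3. Qed.

Lemma inP_nmx (x y z : R) : inP (nmx x y z).
Proof. by apply: inP_mx3; ring. Qed.

Lemma w0_dmx (a b c : R) : w0 *m dmx a b c = dmx c b a *m w0.
Proof. by rewrite !mx3_mul; congr mx3; ring. Qed.

Lemma invmx_w0_nmx (x y z : R) : invmx (w0 *m nmx x y z) = nmx (- x) (x * z - y) (- z) *m w0.
Proof. by apply: invmx_eq; rewrite !mx3_mul mx3_one; congr mx3; ring. Qed.

End Groups.

Section Orbits.
Variable R : realType.
Local Notation M := 'M[R]_3.
Implicit Types (g h k : M) (x y z : pt R).

Definition same_coset g h : Prop := exists2 p, inP p & g = p *m h.

Definition same_pt x y : Prop :=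
  [/\ same_coset x.1.1 y.1.1, same_coset x.1.2 y.1.2 & same_coset x.2 y.2].

Definition orbit_rel x y : Prop := exists2 g, inG g & same_pt (act x g) y.

Lemma coset_eqP g h : h \in unitmx -> coset_eq g h <-> same_coset g h.
Proof.
move=> hU; split=> [gh | [p pP ->]]; last by rewrite /coset_eq mulmxK.
by exists (g *m invmx h); rewrite ?mulmxKV.
Qed.

Lemma same_coset_refl g : same_coset g g.
Proof. by exists 1%:M; [exact: inP1 | rewrite mul1mx]. Qed.

Lemma same_coset_sym g h : same_coset g h -> same_coset h g.
Proof.
case=> p pP ->; exists (invmx p); first exact: inPV.
by rewrite mulmxA mulVmx ?mul1mx //; apply/inG_unit/inP_inG.
Qed.

Lemma same_coset_trans g h k : same_coset g h -> same_coset h k -> same_coset g k.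
Proof. by case=> p pP -> [q qP ->]; exists (p *m q); [exact: inPM | rewrite mulmxA]. Qed.

Lemma same_coset_mulr g h k : same_coset g h -> same_coset (g *m k) (h *m k).
Proof. by case=> p pP ->; exists p; rewrite ?mulmxA. Qed.

Lemma same_pt_refl x : same_pt x x.
Proof. by split; apply: same_coset_refl. Qed.

Lemma same_pt_sym x y : same_pt x y -> same_pt y x.
Proof. by case=> *; split; apply: same_coset_sym. Qed.

Lemma same_pt_trans x y z : same_pt x y -> same_pt y z -> same_pt x z.
Proof.
by case=> h1 h2 h3 [k1 k2 k3]; split; [apply: same_coset_trans h1 k1 |
  apply: same_coset_trans h2 k2 | apply: same_coset_trans h3 k3].
Qed.

Lemma same_pt_act x y g : same_pt x y -> same_pt (act x g) (act y g).
Proof. by case=> *; split; apply: same_coset_mulr. Qed.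

Lemma act1 x : act x 1%:M = x.
Proof. by case: x => [[]] *; rewrite /act /= !mulmx1. Qed.

Lemma actM x g h : act (act x g) h = act x (g *m h).
Proof. by rewrite /act /= !mulmxA. Qed.

Lemma pt_eqP x y : inX y -> pt_eq x y <-> same_pt x y.
Proof.
case=> /inG_unit y1 /inG_unit y2 /inG_unit y3.
by split=> -[e1 e2 e3]; split;
  [exact/(coset_eqP _ y1) | exact/(coset_eqP _ y2) | exact/(coset_eqP _ y3)|
   exact/(coset_eqP _ y1) | exact/(coset_eqP _ y2) | exact/(coset_eqP _ y3)].
Qed.

Lemma same_pt_orbit_rel x y : same_pt x y -> orbit_rel x y.
Proof. by exists 1%:M; [exact: inG1 | rewrite act1]. Qed.

Lemma orbit_rel_sym x y : orbit_rel x y -> orbit_rel y x.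
Proof.
case=> g gG xy; exists (invmx g); first exact: inGV.
apply: same_pt_sym; rewrite -[x in same_pt x _]act1 -(mulmxV (inG_unit gG)) -actM.
exact: same_pt_act.
Qed.

Lemma orbit_rel_trans x y z : orbit_rel x y -> orbit_rel y z -> orbit_rel x z.
Proof.
case=> g gG xy [h hG yz]; exists (g *m h); first exact: inGM.
by rewrite -actM; apply: same_pt_trans yz; apply: same_pt_act.
Qed.

Lemma inX_act x g : inX x -> inG g -> inX (act x g).
Proof. by case=> *; split; apply: inGM. Qed.

Lemma in_GorbitP x y : inX x -> in_Gorbit x y <-> inX y /\ orbit_rel x y.
Proof.
move=> xX; split=> -[yX [g]].
  by case=> gG /(pt_eqP _ (inX_act xX gG)) /same_pt_sym xy; split=> //; exists g.
move=> gG xy; split=> //; exists g; split=> //.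
exact/(pt_eqP _ (inX_act xX gG))/same_pt_sym.
Qed.

Lemma in_stabP x g : inX x -> in_stab x g <-> inG g /\ same_pt (act x g) x.
Proof. by move=> xX; split=> -[gG /(pt_eqP _ xX) ?]. Qed.

End Orbits.

Section BasePoints.
Variable R : realType.
Local Notation M := 'M[R]_3.
Local Notation w0 := (@w0 R).

(* d(a,b,c) sends the base point of n(x,y,z) to that of n(x',y',z'). *)
Definition diag_moves (a b c x y z x' y' z' : R) : Prop :=
  [/\ a * b * c = 1, x * b = a * x', y * c = a * y' & z * c = b * z'].

Lemma inX_base_nmx (x y z : R) : inX (base_pt (nmx x y z)).
Proof.
by split; [exact: inG1 | exact: inGw0 | apply: inGM; [exact: inGw0 | exact/inP_inG/inP_nmx]].
Qed.

Lemma P_cap_w0Pw0 (g : M) : same_coset g 1%:M -> same_coset (w0 *m g) w0 ->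
  exists a b c, g = dmx a b c /\ a * b * c = 1.
Proof.
case=> p /inP_form[a [b [c [d [e [f [-> adf]]]]]]] ->; rewrite mulmx1.
case=> q /inP_form[? [? [? [? [? [? [-> _]]]]]]].
rewrite !mx3_mul => /mx3_inj[_ _ _ _ _ e0 _ b0 c0].
by exists a, d, f; split=> //; congr mx3; lra.
Qed.

Lemma same_coset_w0_nmx_dmx (a b c x y z x' y' z' : R) : a * b * c = 1 ->
  same_coset (w0 *m nmx x y z *m dmx a b c) (w0 *m nmx x' y' z') <->
  [/\ x * b = a * x', y * c = a * y' & z * c = b * z'].
Proof.
move=> abc; have w0n_unit : w0 *m nmx x' y' z' \in unitmx.
  by apply/inG_unit/inGM; [exact: inGw0 | exact/inP_inG/inP_nmx].
rewrite -coset_eqP // /coset_eq invmx_w0_nmx.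
have inG_prod :
    inG (w0 *m nmx x y z *m dmx a b c *m (nmx (- x') (x' * z' - y') (- z') *m w0)).
  have inG_nmx (s t u : R) : inG (nmx s t u) by exact/inP_inG/inP_nmx.
  have inG_dmx := inP_inG (inP_dmx abc).
  by rewrite /inG !det_mulmx inGw0 !inG_nmx inG_dmx !mulr1.
rewrite /inP; split=> [[_] | [ex ey ez]].
  rewrite /w0 /nmx /dmx !mx3_mul mx3_upper => -[e10 e20 e21].
  have ex : x * b = a * x' by lra.
  have exz : z' * (x * b) = z' * (a * x') by rewrite ex.
  by split; lra.
have exz : z' * (x * b) = z' * (a * x') by rewrite ex.
by split=> //; rewrite /w0 /nmx /dmx !mx3_mul mx3_upper; split; lra.
Qed.

Lemma same_pt_base_act (g : M) (x y z x' y' z' : R) :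
  same_pt (act (base_pt (nmx x y z)) g) (base_pt (nmx x' y' z')) <->
  exists a b c, g = dmx a b c /\ diag_moves a b c x y z x' y' z'.
Proof.
split=> [[/= g1 g2] | [a [b [c [-> [abc ex ey ez]]]]]].
  rewrite mul1mx in g1; have [a [b [c [-> abc]]]] := P_cap_w0Pw0 g1 g2.
  by case/(same_coset_w0_nmx_dmx _ _ _ _ _ _ abc) => *; exists a, b, c.
split=> /=.
- by exists (dmx a b c); [exact: inP_dmx | rewrite mul1mx mulmx1].
- by exists (dmx c b a); [apply: inP_dmx; rewrite -abc; ring | exact: w0_dmx].
- exact/same_coset_w0_nmx_dmx.
Qed.

Lemma orbit_rel_base (x y z x' y' z' : R) :
  orbit_rel (base_pt (nmx x y z)) (base_pt (nmx x' y' z')) <->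
  exists a b c, diag_moves a b c x y z x' y' z'.
Proof.
split=> [[g _ /same_pt_base_act[a [b [c [_ moves]]]]] | [a [b [c moves]]]].
  by exists a, b, c.
have [abc _ _ _] := moves.
exists (dmx a b c); first exact/inP_inG/inP_dmx.
by apply/same_pt_base_act; exists a, b, c.
Qed.

Lemma in_stab_base (x y z : R) (g : M) : in_stab (base_pt (nmx x y z)) g <->
  exists a b c, g = dmx a b c /\ diag_moves a b c x y z x y z.
Proof.
rewrite (in_stabP _ (inX_base_nmx x y z)); split=> [[_ /same_pt_base_act //] | gE].
split; last exact/same_pt_base_act.
by have [a [b [c [-> [abc _ _ _]]]]] := gE; exact/inP_inG/inP_dmx.
Qed.

End BasePoints.

Lemma exists_cube_root (F : rcfType) (c : F) : exists t : F, t ^+ 3 = c.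
Proof.
pose s := `|c| + 1; have s_gt : `|c| < s by rewrite ltrDl.
have s_le_s3 : s <= s ^+ 3 by rewrite ler_eXnr // lerDr.
have c_le := ler_norm c; have c_ge : - `|c| <= c by rewrite lerNl -normrN ler_norm.
have [||t _ /rootP] := @poly_ivt F ('X^3 - c%:P) (- s) s; first by lra.
  by rewrite !hornerE (_ : (- s) ^+ 3 = - s ^+ 3); [lra | ring].
by rewrite !hornerE => /eqP; rewrite subr_eq0 => /eqP; exists t.
Qed.

Lemma cube_eq1 (F : realDomainType) (a : F) : a ^+ 3 = 1 -> a = 1.
Proof.
move=> a3; have a_gt0 : 0 < a by rewrite -(exprn_odd_gt0 _ (isT : odd 3)) a3 ltr01.
by apply/eqP; rewrite -(pexpr_eq1 (isT : (0 < 3)%N) (ltW a_gt0)) a3.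
Qed.

Section Classification.
Variable R : realType.
Local Notation M := 'M[R]_3.
Local Notation w0 := (@w0 R).

Lemma diag_moves_scale (s t x y z : R) : s != 0 -> t != 0 ->
  exists a b c, diag_moves a b c x y z (x * s) (y * t) (z * t / s).
Proof.
move=> s0 t0; have [a a3] := exists_cube_root (s * t)^-1.
(* d(a, s a, t a) has determinant s t a^3 = 1. *)
exists a, (s * a), (t * a); split.
- have -> : a * (s * a) * (t * a) = s * t * a ^+ 3 by ring.
  by rewrite a3 mulfV // mulf_neq0.
- by ring.
- by ring.
- by field.
Qed.

Lemma orbit_rel_base_scale (s t x y z x' y' z' : R) : s != 0 -> t != 0 ->
  x' = x * s -> y' = y * t -> z' = z * t / s ->
  orbit_rel (base_pt (nmx x y z)) (base_pt (nmx x' y' z')).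
Proof. by move=> s0 t0 -> -> ->; apply/orbit_rel_base/diag_moves_scale. Qed.

Lemma base_pt_orbit_rep (x y z : R) :
  exists2 r : rep R, rep_valid r & orbit_rel (base_pt (nmx x y z)) (base_pt (rep_n r)).
Proof.
case: (eqVneq x 0) => [->|x0]; case: (eqVneq y 0) => [->|y0]; case: (eqVneq z 0) => [->|z0];
  [ exists N000 => //=; apply: (orbit_rel_base_scale (s := 1) (t := 1))
  | exists N001 => //=; apply: (orbit_rel_base_scale (s := z) (t := 1))
  | exists N010 => //=; apply: (orbit_rel_base_scale (s := 1) (t := y^-1))
  | exists N011 => //=; apply: (orbit_rel_base_scale (s := z / y) (t := y^-1))
  | exists N100 => //=; apply: (orbit_rel_base_scale (s := x^-1) (t := 1))
  | exists N101 => //=; apply: (orbit_rel_base_scale (s := x^-1) (t := (x * z)^-1))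
  | exists N110 => //=; apply: (orbit_rel_base_scale (s := x^-1) (t := y^-1))
  | exists (Gen (x * z / y));
      [apply/eqP | apply: (orbit_rel_base_scale (s := x^-1) (t := y^-1))]].
all: try field.
all: by rewrite ?(invr_eq0, mulf_eq0, negb_or, oner_eq0) //=; repeat (apply/andP; split).
Qed.

(* A complete invariant of the D-orbits; the last entry is the junk value 0 when y = 0. *)
Definition nkey (x y z : R) : bool * bool * bool * R := (x != 0, y != 0, z != 0, x * z / y).

Lemma diag_moves_nkey (a b c x y z x' y' z' : R) :
  diag_moves a b c x y z x' y' z' -> nkey x y z = nkey x' y' z'.
Proof.
move=> [abc ex ey ez]; have [a0 b0 c0] := prod3_neq0 abc.
have -> : x' = x * b / a by rewrite ex; field.
have -> : y' = y * c / a by rewrite ey; field.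
have -> : z' = z * c / b by rewrite ez; field.
rewrite /nkey !mulf_eq0 !invr_eq0 (negPf a0) (negPf b0) (negPf c0) !orbF.
congr (_, _); have [->|y0] := eqVneq y 0; first by rewrite !(mul0r, invr0, mulr0).
by field; rewrite a0 b0 c0 y0.
Qed.

Lemma rep_orbits_disjoint (r1 r2 : rep R) (y : pt R) : rep_valid r1 -> rep_valid r2 ->
  in_Gorbit (base_pt (rep_n r1)) y -> in_Gorbit (base_pt (rep_n r2)) y -> r1 = r2.
Proof.
have inX_rep (r : rep R) : inX (base_pt (rep_n r)) by case: r => *; exact: inX_base_nmx.
move=> v1 v2 /(in_GorbitP _ (inX_rep r1))[_ o1] /(in_GorbitP _ (inX_rep r2))[_ o2].
move: (orbit_rel_trans o1 (orbit_rel_sym o2)) => {o1 o2}.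
case: r1 v1 => [u1|||||||] v1; case: r2 v2 => [u2|||||||] v2 /=;
  move=> /orbit_rel_base[a [b [c /diag_moves_nkey]]].
all: rewrite /nkey ?(eqxx, oner_eq0, mul1r, divr1) /=.
all: try (move/eqP/negPf: v1 => ->); try (move/eqP/negPf: v2 => ->).
all: by move=> // -[] // ->.
Qed.

Lemma same_pt_base_upper (m : M) : inP m ->
  exists x y z, same_pt (base_pt m) (base_pt (nmx x y z)).
Proof.
case/inP_form=> a [b [c [d [e [f [-> adf]]]]]]; have [a0 d0 f0] := prod3_neq0 adf.
exists (b / a), (c / a), (e / d); split=> /=; try exact: same_coset_refl.
exists (dmx f d a); first by apply: inP_dmx; rewrite -adf; ring.
by rewrite /w0 /dmx /nmx !mx3_mul; congr mx3; field; rewrite ?a0 ?d0.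
Qed.

Lemma inG_Pw0P (p q : M) : inP p -> inP q -> inG (p *m w0 *m q).
Proof. by move=> /inP_inG pG /inP_inG qG; do !apply: inGM => //; exact: inGw0. Qed.

Lemma in_S_orbit_rel (y : pt R) : in_S y -> exists2 m, inP m & orbit_rel (base_pt m) y.
Proof.
case=> yX [_ [_ [g [[p [q [pP [qP ->]]]] [p' [q' [pP' [qP' ->]]]] gG yg]]]].
exists (q' *m invmx q); first exact: inPM qP' (inPV qP).
apply: (@orbit_rel_trans _ _ (1%:M, p *m w0 *m q, p' *m w0 *m q')).
  exists q; first exact: inP_inG.
  split=> /=; first by exists q; rewrite // mul1mx mulmx1.
    by apply: same_coset_sym; exists p; rewrite // !mulmxA.
  apply: same_coset_sym; exists p'; rewrite // -!mulmxA mulVmx ?mulmx1 //.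
  exact/inG_unit/inP_inG.
have X0 : inX (1%:M, p *m w0 *m q, p' *m w0 *m q').
  by split; [exact: inG1 | apply: inG_Pw0P | apply: inG_Pw0P].
by exists g => //; apply/same_pt_sym/(pt_eqP _ (inX_act X0 gG)).
Qed.

Lemma in_S_cover (y : pt R) :
  in_S y -> exists r : rep R, rep_valid r /\ in_Gorbit (base_pt (rep_n r)) y.
Proof.
move=> yS; have [m /same_pt_base_upper[x [x' [x'' mx]]] my] := in_S_orbit_rel yS.
have [r rv xr] := base_pt_orbit_rep x x' x''.
exists r; split=> //; apply/in_GorbitP; first by case: (r) => *; exact: inX_base_nmx.
split; first by case: yS.
apply: orbit_rel_trans (orbit_rel_sym xr) _.
exact: orbit_rel_trans (orbit_rel_sym (same_pt_orbit_rel mx)) my.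
Qed.

Lemma base_pt_in_S (x y z : R) : in_S (base_pt (nmx x y z)).
Proof.
split; first exact: inX_base_nmx.
exists w0, (w0 *m nmx x y z), 1%:M; split.
- exists 1%:M, 1%:M; rewrite mul1mx mulmx1.
  by split; [exact: inP1 | split; first exact: inP1].
- exists 1%:M, (nmx x y z); rewrite mul1mx.
  by split; [exact: inP1 | split; first exact: inP_nmx].
- exact: inG1.
- by rewrite act1; apply/(pt_eqP _ (inX_base_nmx x y z)); exact: same_pt_refl.
Qed.

End Classification.

Section LieAlgebra.
Variable R : realType.
Local Notation M := 'M[R]_3.

Fact lowpart_linear : linear (@lowpart R).
Proof.
by move=> k A B; apply/matrixP => i j; rewrite !mxE; case: ifP; rewrite ?mulr0 ?addr0.
Qed.

Variable x : pt R.

Fact stab_constraints_linear : linear (stab_constraints x).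
Proof.
move=> k A B; rewrite /stab_constraints !mulmxDr !mulmxDl -!scalemxAr -!scalemxAl.
by rewrite !lowpart_linear mxtraceD mxtraceZ.
Qed.

HB.instance Definition _ :=
  GRing.isLinear.Build R M _ _ (stab_constraints x) stab_constraints_linear.

Lemma mem_stab_lie (X : M) :
  (X \in lker (linfun (stab_constraints x))) = (stab_constraints x X == 0).
Proof. by rewrite memv_ker lfunE. Qed.

End LieAlgebra.

Section LieDimension.
Variable R : realType.
Local Notation M := 'M[R]_3.
Local Notation w0 := (@w0 R).

(* The linearization of [diag_moves a b c x y z x y z] at the identity. *)
Definition lie_moves (p q r x y z : R) : Prop :=
  [/\ p + q + r = 0, x * (q - p) = 0, y * (r - p) = 0 & z * (r - q) = 0].

Lemma lowpart_mx3_eq0 (a00 a01 a02 a10 a11 a12 a20 a21 a22 : R) :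
  (lowpart (mx3 a00 a01 a02 a10 a11 a12 a20 a21 a22) == 0) =
  [&& a10 == 0, a20 == 0 & a21 == 0].
Proof.
rewrite mx3_lowpart mx3_zero.
by apply/eqP/and3P => [/mx3_inj[-> -> ->] | [/eqP-> /eqP-> /eqP->]].
Qed.

Lemma mem_stab_lie_base (x y z : R) (X : M) :
  X \in lker (linfun (stab_constraints (base_pt (nmx x y z)))) <->
  exists p q r, X = dmx p q r /\ lie_moves p q r x y z.
Proof.
rewrite mem_stab_lie /stab_constraints /= invmx_w0_nmx invmx1 invmx_w0.
rewrite -[0]/(0, 0, (0, 0)) !xpair_eqE [X]mx3_eta.
move: (X i0 i0) (X i0 i1) (X i0 i2) (X i1 i0) (X i1 i1) (X i1 i2) (X i2 i0) (X i2 i1) (X i2 i2).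
move=> p a01 a02 a10 q a12 a20 a21 r.
rewrite mx3_one /w0 /nmx !mx3_mul !lowpart_mx3_eq0 mx3_tr; split.
  move=> /and3P[/and4P[/and3P[/eqP e10 /eqP e20 /eqP e21] /eqP e12 /eqP e02 /eqP e01]].
  move=> /and3P[/eqP f10 /eqP f20 /eqP f21] /eqP tr.
  have [? ? ?] : [/\ a01 = 0, a02 = 0 & a12 = 0] by split; lra.
  have [? ? ?] : [/\ a10 = 0, a20 = 0 & a21 = 0] by split; lra.
  subst; exists p, q, r; split=> //.
  have hx : x * (q - p) = 0 by lra.
  have hxz : z * (x * (q - p)) = 0 by rewrite hx mulr0.
  by split=> //; lra.
case=> p' [q' [r' [/mx3_inj[-> -> -> -> -> -> -> -> ->] [tr hx hy hz]]]].
have hxz : z * (x * (q' - p')) = 0 by rewrite hx mulr0.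
by rewrite !(mul0r, mulr0, add0r, addr0); repeat (apply/andP; split); apply/eqP; lra.
Qed.

Lemma dmxZ (k a b c : R) : dmx (k * a) (k * b) (k * c) = k *: dmx a b c.
Proof. by apply/matrixP; elim/ord3P; elim/ord3P; rewrite !mxE /= ?mulr0. Qed.

Lemma dmxD (a b c a' b' c' : R) : dmx (a + a') (b + b') (c + c') = dmx a b c + dmx a' b' c'.
Proof. by apply/matrixP; elim/ord3P; elim/ord3P; rewrite !mxE /= ?addr0. Qed.

Lemma dmx_eq0 (a b c : R) : (dmx a b c == 0) = [&& a == 0, b == 0 & c == 0].
Proof.
by rewrite mx3_zero; apply/eqP/and3P => [/mx3_inj[-> -> ->] | [/eqP-> /eqP-> /eqP->]].
Qed.

Lemma lie_moves_eq (p q r x y z : R) : lie_moves p q r x y z ->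
  [/\ x != 0 -> q = p, y != 0 -> r = p & z != 0 -> r = q].
Proof.
case=> _ hx hy hz; split=> [x0 | y0 | z0]; apply/eqP; rewrite -subr_eq0.
- by move/eqP: hx; rewrite mulf_eq0 (negPf x0).
- by move/eqP: hy; rewrite mulf_eq0 (negPf y0).
- by move/eqP: hz; rewrite mulf_eq0 (negPf z0).
Qed.

Lemma stab_lie_dim_nmx_two_nonzero (x y z : R) :
  [|| (x != 0) && (y != 0), (x != 0) && (z != 0) | (y != 0) && (z != 0)] ->
  stab_lie_dim (base_pt (nmx x y z)) = 0%N.
Proof.
move=> two; rewrite /stab_lie_dim; apply/eqP; rewrite dimv_eq0 -subv0.
apply/subvP => X /mem_stab_lie_base[p [q [r [-> moves]]]]; rewrite memv0 dmx_eq0.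
have [qp rp rq] := lie_moves_eq moves; have [tr _ _ _] := moves.
have [qE rE] : q = p /\ r = p.
  case/or3P: two => /andP[n1 n2].
  - by split; [exact: qp | exact: rp].
  - by split; [exact: qp | rewrite rq // qp].
  - by split; [rewrite -rq // rp | exact: rp].
by rewrite qE rE (_ : p = 0) ?eqxx //; lra.
Qed.

Lemma stab_lie_dim_line (x y z p0 q0 r0 : R) : p0 != 0 ->
  (forall p q r,
     lie_moves p q r x y z <-> exists k, [/\ p = k * p0, q = k * q0 & r = k * r0]) ->
  stab_lie_dim (base_pt (nmx x y z)) = 1%N.
Proof.
move=> p00 line; rewrite /stab_lie_dim.
suff -> : lker (linfun (stab_constraints (base_pt (nmx x y z)))) = <[dmx p0 q0 r0]>%VS.
  by rewrite dim_vline dmx_eq0 (negPf p00).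
apply/vspaceP => X; apply/idP/idP.
  case/mem_stab_lie_base=> p [q [r [-> /line[k [-> -> ->]]]]].
  by apply/vlineP; exists k; rewrite dmxZ.
case/vlineP=> k ->; apply/mem_stab_lie_base; exists (k * p0), (k * q0), (k * r0).
by rewrite dmxZ; split=> //; apply/line; exists k.
Qed.

Lemma stab_lie_dim_nmx_x00 (x : R) : x != 0 -> stab_lie_dim (base_pt (nmx x 0 0)) = 1%N.
Proof.
move=> x0; apply: (stab_lie_dim_line (p0 := 1) (q0 := 1) (r0 := -2)) => [|p q r].
  exact: oner_neq0.
split=> [moves | [k [-> -> ->]]]; last by split; ring.
have [qp _ _] := lie_moves_eq moves; have [tr _ _ _] := moves.
by exists p; rewrite qp //; split; lra.
Qed.

Lemma stab_lie_dim_nmx_0y0 (y : R) : y != 0 -> stab_lie_dim (base_pt (nmx 0 y 0)) = 1%N.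
Proof.
move=> y0; apply: (stab_lie_dim_line (p0 := 1) (q0 := -2) (r0 := 1)) => [|p q r].
  exact: oner_neq0.
split=> [moves | [k [-> -> ->]]]; last by split; ring.
have [_ rp _] := lie_moves_eq moves; have [tr _ _ _] := moves.
by exists p; rewrite rp //; split; lra.
Qed.

Lemma stab_lie_dim_nmx_00z (z : R) : z != 0 -> stab_lie_dim (base_pt (nmx 0 0 z)) = 1%N.
Proof.
move=> z0; apply: (stab_lie_dim_line (p0 := -2) (q0 := 1) (r0 := 1)) => [|p q r].
  by rewrite oppr_eq0 pnatr_eq0.
split=> [moves | [k [-> -> ->]]]; last by split; ring.
have [_ _ rq] := lie_moves_eq moves; have [tr _ _ _] := moves.
by exists q; rewrite rq //; split; lra.
Qed.

Lemma stab_lie_dim_nmx_000 : stab_lie_dim (base_pt (@nmx R 0 0 0)) = 2%N.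
Proof.
rewrite /stab_lie_dim; pose A : M := dmx 1 0 (-1); pose B : M := dmx 0 1 (-1).
suff -> : lker (linfun (stab_constraints (base_pt (@nmx R 0 0 0)))) = (<[A]> + <[B]>)%VS.
  rewrite dimv_disjoint_sum ?dim_vline ?dmx_eq0 ?oner_eq0 ?eqxx //.
  apply/eqP; rewrite -subv0; apply/subvP => X; rewrite memv_cap memv0.
  case/andP=> /vlineP[k ->] /vlineP[l]; rewrite -!dmxZ !mulr0 !mulr1 => /mx3_inj[-> _].
  by rewrite mul0r dmx_eq0 eqxx.
apply/vspaceP => X; apply/idP/idP.
  case/mem_stab_lie_base=> p [q [r [-> [tr _ _ _]]]].
  apply/memv_addP; exists (p *: A); first by apply/vlineP; exists p.
  exists (q *: B); first by apply/vlineP; exists q.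
  by rewrite -!dmxZ -dmxD; congr dmx; lra.
case/memv_addP=> _ /vlineP[k ->] [_ /vlineP[l ->] ->].
apply/mem_stab_lie_base; exists k, l, (- k - l); split; last by split; ring.
by rewrite -!dmxZ -dmxD; congr dmx; ring.
Qed.

End LieDimension.

Section Stabilizers.
Variable R : realType.
Local Notation M := 'M[R]_3.

Lemma diag_moves_eq (a b c x y z : R) : diag_moves a b c x y z x y z ->
  [/\ x != 0 -> b = a, y != 0 -> c = a & z != 0 -> c = b].
Proof.
case=> _ ex ey ez; split=> [x0 | y0 | z0].
- by apply: (mulfI x0); rewrite ex mulrC.
- by apply: (mulfI y0); rewrite ey mulrC.
- by apply: (mulfI z0); rewrite ez mulrC.
Qed.

Lemma in_stab_nmx_two_nonzero (x y z : R) :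
  [|| (x != 0) && (y != 0), (x != 0) && (z != 0) | (y != 0) && (z != 0)] ->
  forall g : M, in_stab (base_pt (nmx x y z)) g <-> g = 1%:M.
Proof.
move=> two g; rewrite in_stab_base; split=> [[a [b [c [-> moves]]]] | ->].
  have [ba ca cb] := diag_moves_eq moves; have [abc _ _ _] := moves.
  have [bE cE] : b = a /\ c = a.
    case/or3P: two => /andP[n1 n2].
    - by split; [exact: ba | exact: ca].
    - by split; [exact: ba | rewrite cb // ba].
    - by split; [rewrite -cb // ca | exact: ca].
  have a1 : a = 1 by apply: cube_eq1; rewrite -abc bE cE; ring.
  by rewrite bE cE a1 mx3_one.
by exists 1, 1, 1; rewrite mx3_one; split=> //; split; ring.
Qed.

Lemma in_stab_nmx_x00 (x : R) : x != 0 -> forall g : M,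
  in_stab (base_pt (nmx x 0 0)) g <-> exists a : R, a <> 0 /\ g = dmx a a (1 / a ^+ 2).
Proof.
move=> x0 g; rewrite in_stab_base; split=> [[a [b [c [-> moves]]]] | [a [/eqP a0 ->]]].
  have [ba _ _] := diag_moves_eq moves; have [abc _ _ _] := moves.
  have [a0 _ _] := prod3_neq0 abc; rewrite ba // in abc *.
  exists a; split; first exact/eqP.
  rewrite (_ : c = 1 / a ^+ 2) //.
  by apply: (mulfI (mulf_neq0 a0 a0)); rewrite abc; field.
exists a, a, (1 / a ^+ 2); split=> //; split; by [field | ring].
Qed.

Lemma in_stab_nmx_0y0 (y : R) : y != 0 -> forall g : M,
  in_stab (base_pt (nmx 0 y 0)) g <-> exists a : R, a <> 0 /\ g = dmx a (1 / a ^+ 2) a.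
Proof.
move=> y0 g; rewrite in_stab_base; split=> [[a [b [c [-> moves]]]] | [a [/eqP a0 ->]]].
  have [_ ca _] := diag_moves_eq moves; have [abc _ _ _] := moves.
  have [a0 _ _] := prod3_neq0 abc; rewrite ca // in abc *.
  exists a; split; first exact/eqP.
  rewrite (_ : b = 1 / a ^+ 2) //.
  by apply: (mulfI (mulf_neq0 a0 a0)); rewrite -abc; field.
exists a, (1 / a ^+ 2), a; split=> //; split; by [field | ring].
Qed.

Lemma in_stab_nmx_00z (z : R) : z != 0 -> forall g : M,
  in_stab (base_pt (nmx 0 0 z)) g <-> exists a : R, a <> 0 /\ g = dmx (1 / a ^+ 2) a a.
Proof.
move=> z0 g; rewrite in_stab_base; split=> [[a [b [c [-> moves]]]] | [b [/eqP b0 ->]]].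
  have [_ _ cb] := diag_moves_eq moves; have [abc _ _ _] := moves.
  have [_ b0 _] := prod3_neq0 abc; rewrite cb // in abc *.
  exists b; split; first exact/eqP.
  rewrite (_ : a = 1 / b ^+ 2) //.
  by apply: (mulfI (mulf_neq0 b0 b0)); rewrite -abc; field.
exists (1 / b ^+ 2), b, b; split=> //; split; by [field | ring].
Qed.

Lemma in_stab_nmx_000 (g : M) :
  in_stab (base_pt (@nmx R 0 0 0)) g <-> exists a b c, a * b * c = 1 /\ g = dmx a b c.
Proof.
rewrite in_stab_base; split=> [[a [b [c [-> [abc _ _ _]]]]] | [a [b [c [abc ->]]]]].
  by exists a, b, c.
by exists a, b, c; split=> //; split; rewrite ?mul0r ?mulr0.
Qed.

End Stabilizers.

Theorem mainTheorem5 (R : realType) :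
  (* every listed point lies in S_{w0,w0} *)
  (forall r : rep R, rep_valid r -> in_S (base_pt (rep_n r))) /\
  (* S_{w0,w0} is covered by the listed orbits *)
  (forall y, in_S y -> exists r : rep R, rep_valid r /\ in_Gorbit (base_pt (rep_n r)) y) /\
  (* the listed orbits are pairwise disjoint (distinct for distinct data) *)
  (forall (r1 r2 : rep R) y, rep_valid r1 -> rep_valid r2 ->
     in_Gorbit (base_pt (rep_n r1)) y -> in_Gorbit (base_pt (rep_n r2)) y -> r1 = r2) /\
  (* (i) *)
  (forall u : R, u <> 0 -> orbit_dim (base_pt (nmx 1 1 u)) = 8%N) /\
  (* (ii) *)
  (forall r : rep R, r = N011 \/ r = N101 \/ r = N110 ->
     orbit_dim (base_pt (rep_n r)) = 8%N /\
     (forall g, in_stab (base_pt (rep_n r)) g <-> g = 1%:M)) /\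
  (* (iii) *)
  (orbit_dim (base_pt (@nmx R 1 0 0)) = 7%N /\
   (forall g, in_stab (base_pt (@nmx R 1 0 0)) g <->
      exists a : R, a <> 0 /\ g = dmx a a (1 / a ^+ 2))) /\
  (orbit_dim (base_pt (@nmx R 0 1 0)) = 7%N /\
   (forall g, in_stab (base_pt (@nmx R 0 1 0)) g <->
      exists a : R, a <> 0 /\ g = dmx a (1 / a ^+ 2) a)) /\
  (orbit_dim (base_pt (@nmx R 0 0 1)) = 7%N /\
   (forall g, in_stab (base_pt (@nmx R 0 0 1)) g <->
      exists a : R, a <> 0 /\ g = dmx (1 / a ^+ 2) a a)) /\
  (* (iv): stabilizer D = diagonal matrices of determinant 1 *)
  (orbit_dim (base_pt (@nmx R 0 0 0)) = 6%N /\
   (forall g, in_stab (base_pt (@nmx R 0 0 0)) g <->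
      exists a b c : R, a * b * c = 1 /\ g = dmx a b c)).
Proof.
have one_neq0 : (1 : R) != 0 := oner_neq0 R.
split; first by case=> *; exact: base_pt_in_S.
split; first exact: in_S_cover.
split; first exact: rep_orbits_disjoint.
split; first by move=> u _; rewrite /orbit_dim stab_lie_dim_nmx_two_nonzero // one_neq0.
split.
  move=> r [->|[->|->]]; rewrite /orbit_dim stab_lie_dim_nmx_two_nonzero /= ?eqxx ?one_neq0 //;
    split=> //; apply: in_stab_nmx_two_nonzero; by rewrite ?eqxx ?one_neq0.
split; first by rewrite /orbit_dim stab_lie_dim_nmx_x00 //; split=> //; exact: in_stab_nmx_x00.
split; first by rewrite /orbit_dim stab_lie_dim_nmx_0y0 //; split=> //; exact: in_stab_nmx_0y0.
split; first by rewrite /orbit_dim stab_lie_dim_nmx_00z //; split=> //; exact: in_stab_nmx_00z.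
by rewrite /orbit_dim stab_lie_dim_nmx_000; split=> //; exact: in_stab_nmx_000.
Qed.
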